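(* Let $X$ be a topological space with an open cover $(U_i)_{i\in I}$, and let $\mathcal{P}$ be a 2-gerbe on $X$. Suppose given two families of local trivializing data $(x_i,\phi_{ij},g_{ijk},m_{ijk})$ and $(x'_i,\phi'_{ij},g'_{ijk},m'_{ijk})$, together with comparison data $(\chi_i,\vartheta_{ij},\zeta_{ij})$, and let $\lambda_{ij},\nu_{ijkl},\lambda'_{ij},\nu'_{ijkl},B'_{ijk},r_i,R_i,b_{ijk},Z_{ij}$ be as defined in the context. Then over $U_{ijkl}$ the following two composite 2-arrows $$\lambda'_{ij}(g'_{jkl})\,g'_{ijl}\,\vartheta_{il}\ \Longrightarrow\ \lambda'_{ij}\lambda'_{jk}(\vartheta_{kl})\,\lambda'_{ij}(\vartheta_{jk})\,\vartheta_{ij}\,r_i(g_{ijk})\,r_i(g_{ikl})$$ coincide (i.e. the cube of 2-arrows with faces $r_i(\nu_{ijkl})$, $\nu'_{ijkl}$, $b_{ijk}$, $b_{ijl}$, $b_{ikl}$, $\lambda'_{ij}(b_{jkl})$, $Z_{ij}(g_{jkl})$ and $B'_{ijk}(\vartheta_{kl})$ commutes): (1) $(\lambda'_{ij}(g'_{jkl})\,b_{ijl})$, followed by $(\lambda'_{ij}(b_{jkl})\,\vartheta_{ij}\,r_i(g_{ijl}))$, followed by $(\lambda'_{ij}\lambda'_{jk}(\vartheta_{kl})\,\lambda'_{ij}(\vartheta_{jk})\,Z_{ij}(g_{jkl})\,r_i(g_{ijl}))$, followed by $(\lambda'_{ij}\lambda'_{jk}(\vartheta_{kl})\,\lambda'_{ij}(\vartheta_{jk})\,\vartheta_{ij}\,r_i(\nu_{ijkl}))$;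 (2) $(\nu'_{ijkl}\,\vartheta_{il})$, followed by $(g'_{ijk}\,b_{ikl})$, followed by $(B'_{ijk}(\vartheta_{kl})\,\vartheta_{ik}\,r_i(g_{ikl}))$, followed by $(\lambda'_{ij}\lambda'_{jk}(\vartheta_{kl})\,b_{ijk}\,r_i(g_{ikl}))$.
   Context: A 2-groupoid is a 2-category whose 1-arrows are invertible up to a 2-arrow and whose 2-arrows are strictly invertible. A 2-gerbe $\mathcal{P}$ on $X$ is a 2-stack in 2-groupoids on $X$ (a fibered 2-category in 2-groupoids over the open sets of $X$ whose arrow categories form stacks and for which 2-descent for objects is effective) which is locally non-empty and locally connected. For an object $x\in\mathcal{P}_U$, $\mathcal{G}_x$ is the group-like monoidal stack of 1-arrows $x\to x$ (tensor = composition). $U_{ij}=U_i\cap U_j$ etc.; everything is tacitly restricted to the relevant intersection. Composition of 1-arrows and whiskering are written by juxtaposition ($ab$ = first $b$ then $a$), $\circ$ denotes vertical composition of 2-arrows, and associativity constraints and structure isomorphisms of monoidal functors are suppressed. First data: objects $x_i\in\mathcal{P}_{U_i}$, 1-arrows $\phi_{ij}:x_j\to x_i$ over $U_{ij}$ with chosen quasi-inverses; the monoidal equivalence $\lambda_{ij}:\mathcal{G}_{x_j}\to\mathcal{G}_{x_i}$, $\gamma\mapsto\phi_{ij}\gamma\phi_{ij}^{-1}$, with natural 2-arrows $M_{ij}(\gamma):\phi_{ij}\gamma\Rightarrow\lambda_{ij}(\gamma)\phi_{ij}$; objects $g_{ijk}\in\mathcal{G}_{x_i}$ over $U_{ijk}$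 and 2-arrows $m_{ijk}:g_{ijk}\phi_{ik}\Rightarrow\phi_{ij}\phi_{jk}$; and $\nu_{ijkl}:\lambda_{ij}(g_{jkl})g_{ijl}\Rightarrow g_{ijk}g_{ikl}$ the unique 2-arrow with $(\phi_{ij}m_{jkl})\circ(M_{ij}(g_{jkl})^{-1}\phi_{jl})\circ(\lambda_{ij}(g_{jkl})m_{ijl})=(m_{ijk}\phi_{kl})\circ(g_{ijk}m_{ikl})\circ(\nu_{ijkl}\phi_{il})$. The second data $x'_i,\phi'_{ij},\lambda'_{ij},M'_{ij},g'_{ijk},m'_{ijk},\nu'_{ijkl}$ are of exactly the same kind. For $\gamma\in\mathcal{G}_{x'_k}$, $B'_{ijk}(\gamma):g'_{ijk}\lambda'_{ik}(\gamma)\Rightarrow\lambda'_{ij}\lambda'_{jk}(\gamma)g'_{ijk}$ is the unique 2-arrow with $(\lambda'_{ij}\lambda'_{jk}(\gamma)m'_{ijk})\circ(B'_{ijk}(\gamma)\phi'_{ik})=(M'_{ij}(\lambda'_{jk}(\gamma))\phi'_{jk})\circ(\phi'_{ij}M'_{jk}(\gamma))\circ(m'_{ijk}\gamma)\circ(g'_{ijk}M'_{ik}(\gamma)^{-1})$. Comparison data: 1-arrows $\chi_i:x_i\to x'_i$ over $U_i$ (with quasi-inverses), inducing monoidal equivalences $r_i:\mathcal{G}_{x_i}\to\mathcal{G}_{x'_i}$, $u\mapsto\chi_iu\chi_i^{-1}$, with natural 2-arrows $R_i(u):\chi_iu\Rightarrow r_i(u)\chi_i$; objects $\vartheta_{ij}\in\mathcal{G}_{x'_i}$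 over $U_{ij}$ and 2-arrows $\zeta_{ij}:\phi'_{ij}\chi_j\Rightarrow\vartheta_{ij}\chi_i\phi_{ij}$. Define $b_{ijk}:g'_{ijk}\vartheta_{ik}\Rightarrow\lambda'_{ij}(\vartheta_{jk})\vartheta_{ij}r_i(g_{ijk})$ over $U_{ijk}$ as the unique 2-arrow such that, as 2-arrows $g'_{ijk}\phi'_{ik}\chi_k\Rightarrow\lambda'_{ij}(\vartheta_{jk})\vartheta_{ij}\chi_i\phi_{ij}\phi_{jk}$, $$(\lambda'_{ij}(\vartheta_{jk})\zeta_{ij}\phi_{jk})\circ(M'_{ij}(\vartheta_{jk})\chi_j\phi_{jk})\circ(\phi'_{ij}\zeta_{jk})\circ(m'_{ijk}\chi_k)=(\lambda'_{ij}(\vartheta_{jk})\vartheta_{ij}\chi_im_{ijk})\circ(\lambda'_{ij}(\vartheta_{jk})\vartheta_{ij}R_i(g_{ijk})^{-1}\phi_{ik})\circ(b_{ijk}\chi_i\phi_{ik})\circ(g'_{ijk}\zeta_{ik}).$$ For $g\in\mathcal{G}_{x_j}$ over $U_{ij}$, define $Z_{ij}(g):\lambda'_{ij}(r_j(g))\vartheta_{ij}\Rightarrow\vartheta_{ij}r_i(\lambda_{ij}(g))$ as the unique 2-arrow such that $$(Z_{ij}(g)\chi_i\phi_{ij})\circ(\lambda'_{ij}(r_j(g))\zeta_{ij})=(\vartheta_{ij}R_i(\lambda_{ij}(g))\phi_{ij})\circ(\vartheta_{ij}\chi_iM_{ij}(g))\circ(\zeta_{ij}g)\circ(\phi'_{ij}R_j(g)^{-1})\circ(M'_{ij}(r_j(g))^{-1}\chi_j).$$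 Finally $r_i(\nu_{ijkl}):r_i(\lambda_{ij}(g_{jkl}))r_i(g_{ijl})\Rightarrow r_i(g_{ijk})r_i(g_{ikl})$ and $\lambda'_{ij}(b_{jkl}):\lambda'_{ij}(g'_{jkl})\lambda'_{ij}(\vartheta_{jl})\Rightarrow\lambda'_{ij}\lambda'_{jk}(\vartheta_{kl})\lambda'_{ij}(\vartheta_{jk})\lambda'_{ij}(r_j(g_{jkl}))$ are the images of $\nu_{ijkl}$ and $b_{jkl}$ under the monoidal functors $r_i$ and $\lambda'_{ij}$. *)

Set Implicit Arguments.
Unset Strict Implicit.

(* Objects, 1-cells [Hom a b] (from a to b), and 2-cells [Cell a b] between
   parallel 1-cells a -> b; a 2-cell carries its source and target 1-cells.
   [comp g f] = "first f then g" (juxtaposition gf); [vcomp β α] = β ∘ α;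
   [hcomp β α] = horizontal composite (juxtaposition βα). *)
Record TwoGroupoid := {
  Obj : Type;
  Hom : Obj -> Obj -> Type;
  Cell : Obj -> Obj -> Type;
  id1 : forall a, Hom a a;
  comp : forall a b c, Hom b c -> Hom a b -> Hom a c;
  src2 : forall a b, Cell a b -> Hom a b;
  tgt2 : forall a b, Cell a b -> Hom a b;
  id2 : forall a b, Hom a b -> Cell a b;
  vcomp : forall a b, Cell a b -> Cell a b -> Cell a b;
  hcomp : forall a b c, Cell b c -> Cell a b -> Cell a c;
  inv2 : forall a b, Cell a b -> Cell a b;
  compA : forall a b c d (f : Hom c d) (g : Hom b c) (h : Hom a b),
      comp f (comp g h) = comp (comp f g) h;
  comp1l : forall a b (f : Hom a b), comp (id1 b) f = f;
  comp1r : forall a b (f : Hom a b), comp f (id1 a) = f;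
  src2_id : forall a b (f : Hom a b), src2 (id2 f) = f;
  tgt2_id : forall a b (f : Hom a b), tgt2 (id2 f) = f;
  src2_v : forall a b (al be : Cell a b),
      tgt2 al = src2 be -> src2 (vcomp be al) = src2 al;
  tgt2_v : forall a b (al be : Cell a b),
      tgt2 al = src2 be -> tgt2 (vcomp be al) = tgt2 be;
  src2_h : forall a b c (be : Cell b c) (al : Cell a b),
      src2 (hcomp be al) = comp (src2 be) (src2 al);
  tgt2_h : forall a b c (be : Cell b c) (al : Cell a b),
      tgt2 (hcomp be al) = comp (tgt2 be) (tgt2 al);
  vcompA : forall a b (al be ga : Cell a b),
      tgt2 al = src2 be -> tgt2 be = src2 ga ->
      vcomp ga (vcomp be al) = vcomp (vcomp ga be) al;
  vcomp1r : forall a b (al : Cell a b), vcomp al (id2 (src2 al)) = al;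
  vcomp1l : forall a b (al : Cell a b), vcomp (id2 (tgt2 al)) al = al;
  hcompA : forall a b c d (ga : Cell c d) (be : Cell b c) (al : Cell a b),
      hcomp ga (hcomp be al) = hcomp (hcomp ga be) al;
  hcomp1l : forall a b (al : Cell a b), hcomp (id2 (id1 b)) al = al;
  hcomp1r : forall a b (al : Cell a b), hcomp al (id2 (id1 a)) = al;
  hcomp_id2 : forall a b c (g : Hom b c) (f : Hom a b),
      hcomp (id2 g) (id2 f) = id2 (comp g f);
  interchange : forall a b c (be be' : Cell b c) (al al' : Cell a b),
      tgt2 be = src2 be' -> tgt2 al = src2 al' ->
      hcomp (vcomp be' be) (vcomp al' al) = vcomp (hcomp be' al') (hcomp be al);
  src2_inv : forall a b (al : Cell a b), src2 (inv2 al) = tgt2 al;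
  tgt2_inv : forall a b (al : Cell a b), tgt2 (inv2 al) = src2 al;
  inv2_l : forall a b (al : Cell a b), vcomp (inv2 al) al = id2 (src2 al);
  inv2_r : forall a b (al : Cell a b), vcomp al (inv2 al) = id2 (tgt2 al);
  hom_weak_inv : forall a b (f : Hom a b), exists (g : Hom b a)
      (e : Cell a a) (e' : Cell b b),
      src2 e = comp g f /\ tgt2 e = id1 a /\ src2 e' = comp f g /\ tgt2 e' = id1 b
}.

Arguments Hom : clear implicits.
Arguments Cell : clear implicits.
Arguments id1 {_} a.
Arguments comp {_ a b c} _ _.
Arguments src2 {_ a b} _.
Arguments tgt2 {_ a b} _.
Arguments id2 {_ a b} _.
Arguments vcomp {_ a b} _ _.
Arguments hcomp {_ a b c} _ _.
Arguments inv2 {_ a b} _.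

Record qinv (C : TwoGroupoid) (a b : Obj C) (f : Hom C a b) := {
  qi : Hom C b a;
  qi_ep : Cell C a a;
  qi_ep_src : src2 qi_ep = comp qi f;
  qi_ep_tgt : tgt2 qi_ep = id1 a;
  qi_et : Cell C b b;
  qi_et_src : src2 qi_et = comp f qi;
  qi_et_tgt : tgt2 qi_et = id1 b
}.
Arguments qi {C a b f} _.
Arguments qi_ep {C a b f} _.
Arguments qi_et {C a b f} _.

Section Constructions.
Variable C : TwoGroupoid.
Local Notation Hom := (Hom C).
Local Notation Cell := (Cell C).

Definition whL {a b c : Obj C} (f : Hom b c) (al : Cell a b) : Cell a c :=
  hcomp (id2 f) al.
Definition whR {a b c : Obj C} (al : Cell b c) (f : Hom a b) : Cell a c :=
  hcomp al (id2 f).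
Definition wh {a b c d : Obj C} (f : Hom c d) (al : Cell b c) (g : Hom a b)
  : Cell a d := whL f (whR al g).

Section Conj.
Variables (a b : Obj C) (phi : Hom a b) (Q : qinv phi).

Definition lam (ga : Hom a a) : Hom b b := comp (comp phi ga) (qi Q).
Definition lam2 (be : Cell a a) : Cell b b := wh phi be (qi Q).
(* the natural 2-arrow  M(γ) : φ γ => λ(γ) φ *)
Definition Mc (ga : Hom a a) : Cell a b :=
  whL (comp phi ga) (inv2 (qi_ep Q)).
(* monoidal structure  λ(u) λ(v) => λ(u v) *)
Definition mu (u v : Hom a a) : Cell b b :=
  whL (comp phi u) (whR (qi_ep Q) (comp v (qi Q))).
(* λ(u) λ(v) λ(w) => λ(u v w) *)
Definition mu3 (u v w : Hom a a) : Cell b b :=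
  vcomp (mu u (comp v w)) (whL (lam u) (mu v w)).
(* image of a 2-arrow  β : u1 u2 => v1 v2  under the monoidal functor λ:
   λ(u1) λ(u2) => λ(v1) λ(v2) *)
Definition mon22 (u1 u2 v1 v2 : Hom a a) (be : Cell a a) : Cell b b :=
  vcomp (inv2 (mu v1 v2)) (vcomp (lam2 be) (mu u1 u2)).
(* image of  β : u1 u2 => v1 v2 v3 :  λ(u1) λ(u2) => λ(v1) λ(v2) λ(v3) *)
Definition mon23 (u1 u2 v1 v2 v3 : Hom a a) (be : Cell a a) : Cell b b :=
  vcomp (inv2 (mu3 v1 v2 v3)) (vcomp (lam2 be) (mu u1 u2)).
End Conj.

Definition is_m {xa xb xc : Obj C} (g : Hom xa xa) (phac : Hom xc xa)
  (phab : Hom xb xa) (phbc : Hom xc xb) (m : Cell xc xa) : Prop :=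
  src2 m = comp g phac /\ tgt2 m = comp phab phbc.

Definition is_zeta {xa xb ya yb : Obj C} (psab : Hom yb ya) (chb : Hom xb yb)
  (thab : Hom ya ya) (cha : Hom xa ya) (phab : Hom xb xa) (ze : Cell xb ya)
  : Prop :=
  src2 ze = comp psab chb /\ tgt2 ze = comp (comp thab cha) phab.

Definition is_nu {xi xj xk xl : Obj C}
  (phij : Hom xj xi) (Qij : qinv phij) (phik : Hom xk xi) (phil : Hom xl xi)
  (phjk : Hom xk xj) (phjl : Hom xl xj) (phkl : Hom xl xk)
  (gijk gijl gikl : Hom xi xi) (gjkl : Hom xj xj)
  (mijk : Cell xk xi) (mijl mikl : Cell xl xi) (mjkl : Cell xl xj)
  (nu : Cell xi xi) : Prop :=
  src2 nu = comp (lam Qij gjkl) gijl /\ tgt2 nu = comp gijk gikl /\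
  vcomp (whL phij mjkl)
    (vcomp (whR (inv2 (Mc Qij gjkl)) phjl) (whL (lam Qij gjkl) mijl))
  = vcomp (whR mijk phkl) (vcomp (whL gijk mikl) (whR nu phil)).

Definition is_B {yi yj yk : Obj C}
  (psij : Hom yj yi) (Qij : qinv psij) (psjk : Hom yk yj) (Qjk : qinv psjk)
  (psik : Hom yk yi) (Qik : qinv psik)
  (hijk : Hom yi yi) (nijk : Cell yk yi) (ga : Hom yk yk) (B : Cell yi yi)
  : Prop :=
  src2 B = comp hijk (lam Qik ga) /\
  tgt2 B = comp (lam Qij (lam Qjk ga)) hijk /\
  vcomp (whL (lam Qij (lam Qjk ga)) nijk) (whR B psik)
  = vcomp (whR (Mc Qij (lam Qjk ga)) psjk)
      (vcomp (whL psij (Mc Qjk ga))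
         (vcomp (whR nijk ga) (whL hijk (inv2 (Mc Qik ga))))).

Definition is_b {xi xj xk yi yj yk : Obj C}
  (phij : Hom xj xi) (phjk : Hom xk xj) (phik : Hom xk xi)
  (psij : Hom yj yi) (Qsij : qinv psij) (psjk : Hom yk yj) (psik : Hom yk yi)
  (chi : Hom xi yi) (Qci : qinv chi) (chj : Hom xj yj) (chk : Hom xk yk)
  (thij : Hom yi yi) (thjk : Hom yj yj) (thik : Hom yi yi)
  (zeij : Cell xj yi) (zejk : Cell xk yj) (zeik : Cell xk yi)
  (gijk : Hom xi xi) (hijk : Hom yi yi) (mijk : Cell xk xi) (nijk : Cell yk yi)
  (b : Cell yi yi) : Prop :=
  src2 b = comp hijk thik /\
  tgt2 b = comp (comp (lam Qsij thjk) thij) (lam Qci gijk) /\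
  vcomp (wh (lam Qsij thjk) zeij phjk)
    (vcomp (whR (Mc Qsij thjk) (comp chj phjk))
       (vcomp (whL psij zejk) (whR nijk chk)))
  = vcomp (whL (comp (comp (lam Qsij thjk) thij) chi) mijk)
      (vcomp (wh (comp (lam Qsij thjk) thij) (inv2 (Mc Qci gijk)) phik)
         (vcomp (whR b (comp chi phik)) (whL hijk zeik))).

Definition is_Z {xi xj yi yj : Obj C}
  (phij : Hom xj xi) (Qij : qinv phij) (psij : Hom yj yi) (Qsij : qinv psij)
  (chi : Hom xi yi) (Qci : qinv chi) (chj : Hom xj yj) (Qcj : qinv chj)
  (thij : Hom yi yi) (zeij : Cell xj yi) (g : Hom xj xj) (Z : Cell yi yi)
  : Prop :=
  src2 Z = comp (lam Qsij (lam Qcj g)) thij /\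
  tgt2 Z = comp thij (lam Qci (lam Qij g)) /\
  vcomp (whR Z (comp chi phij)) (whL (lam Qsij (lam Qcj g)) zeij)
  = vcomp (wh thij (Mc Qci (lam Qij g)) phij)
      (vcomp (whL (comp thij chi) (Mc Qij g))
         (vcomp (whR zeij g)
            (vcomp (whL psij (inv2 (Mc Qcj g)))
               (whR (inv2 (Mc Qsij (lam Qcj g))) chj)))).

End Constructions.

(* Whiskering on the right by the equivalences chi_i and phi_il, and composing
   with invertible 2-arrows above and below, are injective on 2-arrows.  After
   such a framing, both composites are flattened into vertical chains of
   layers u x v (an atomic 2-arrow x whiskered by 1-arrows).  The defining
   equations of b_ikl, B'_ijk, b_ijk, nu'_ijkl, b_ijl, b_jkl, Z_ij and nu_ijkl
   are then pasted in one at a time, after bringing the layers of each face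
   together with the interchange law and cancelling inverse pairs, until the
   two chains coincide. *)

Set Implicit Arguments.
Unset Strict Implicit.

Section TwoCells.
Variable C : TwoGroupoid.

Definition is_cell {a b : Obj C} (x : Cell C a b) (f g : Hom C a b) : Prop :=
  src2 x = f /\ tgt2 x = g.

Lemma is_cell_vcomp a b (x y : Cell C a b) f g g' h :
  is_cell x f g -> is_cell y g' h -> g = g' -> is_cell (vcomp y x) f h.
Proof.
intros [xs xt] [ys yt] <-; split.
- rewrite src2_v; congruence.
- rewrite tgt2_v; congruence.
Qed.

Lemma is_cell_hcomp a b c (y : Cell C b c) (x : Cell C a b) f g f' g' :
  is_cell y f g -> is_cell x f' g' -> is_cell (hcomp y x) (comp f f') (comp g g').
Proof. intros [ys yt] [xs xt]; split; [rewrite src2_h | rewrite tgt2_h]; congruence. Qed.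

Lemma is_cell_id2 a b (f : Hom C a b) : is_cell (id2 f) f f.
Proof. split; [apply src2_id | apply tgt2_id]. Qed.

Lemma is_cell_inv2 a b (x : Cell C a b) f g : is_cell x f g -> is_cell (inv2 x) g f.
Proof. intros [xs xt]; split; [rewrite src2_inv | rewrite tgt2_inv]; assumption. Qed.

Lemma is_cell_wh s p q t (u : Hom C q t) (x : Cell C p q) (v : Hom C s p) f g :
  is_cell x f g -> is_cell (wh u x v) (comp u (comp f v)) (comp u (comp g v)).
Proof.
intros H; apply is_cell_hcomp; [apply is_cell_id2 | apply is_cell_hcomp, is_cell_id2; exact H].
Qed.

Lemma is_cell_qi_ep a b (f : Hom C a b) (Q : qinv f) : is_cell (qi_ep Q) (comp (qi Q) f) (id1 a).
Proof. split; [apply qi_ep_src | apply qi_ep_tgt]. Qed.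

Lemma is_cell_qi_et a b (f : Hom C a b) (Q : qinv f) : is_cell (qi_et Q) (comp f (qi Q)) (id1 b).
Proof. split; [apply qi_et_src | apply qi_et_tgt]. Qed.

Lemma is_cell_eq a b (x : Cell C a b) f g f' g' :
  is_cell x f g -> f = f' -> g = g' -> is_cell x f' g'.
Proof. intros H <- <-; exact H. Qed.

Lemma is_cell_composable a b (x y : Cell C a b) f g g' h :
  is_cell x f g -> is_cell y g' h -> g = g' -> tgt2 x = src2 y.
Proof. intros [_ xt] [ys _] <-; congruence. Qed.

Lemma is_cell_src2 a b (x : Cell C a b) f g f' : is_cell x f g -> f = f' -> src2 x = f'.
Proof. intros [xs _] <-; exact xs. Qed.

Lemma is_cell_tgt2 a b (x : Cell C a b) f g g' : is_cell x f g -> g = g' -> tgt2 x = g'.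
Proof. intros [_ xt] <-; exact xt. Qed.

Lemma vcomp_id2l a b (x : Cell C a b) f : tgt2 x = f -> vcomp (id2 f) x = x.
Proof. intros <-; apply vcomp1l. Qed.

Lemma vcomp_id2r a b (x : Cell C a b) f : src2 x = f -> vcomp x (id2 f) = x.
Proof. intros <-; apply vcomp1r. Qed.

Lemma whL_vcomp a b c (f : Hom C b c) (x y : Cell C a b) :
  tgt2 x = src2 y -> hcomp (id2 f) (vcomp y x) = vcomp (hcomp (id2 f) y) (hcomp (id2 f) x).
Proof.
intros e; rewrite <- interchange; [| rewrite tgt2_id, src2_id; reflexivity | exact e].
now rewrite vcomp_id2l by apply tgt2_id.
Qed.

Lemma whR_vcomp a b c (f : Hom C a b) (x y : Cell C b c) :
  tgt2 x = src2 y -> hcomp (vcomp y x) (id2 f) = vcomp (hcomp y (id2 f)) (hcomp x (id2 f)).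
Proof.
intros e; rewrite <- interchange; [| exact e | rewrite tgt2_id, src2_id; reflexivity].
now rewrite (vcomp_id2l (x := id2 f)) by apply tgt2_id.
Qed.

Lemma inv2_unique a b (x y : Cell C a b) :
  vcomp y x = id2 (src2 x) -> src2 y = tgt2 x -> y = inv2 x.
Proof.
intros yx ys.
transitivity (vcomp y (vcomp x (inv2 x))).
- now rewrite inv2_r, vcomp_id2r.
- rewrite vcompA, yx by (rewrite ?tgt2_inv; auto).
  apply vcomp_id2l; rewrite tgt2_inv; reflexivity.
Qed.

Lemma inv2_inv2 a b (x : Cell C a b) : inv2 (inv2 x) = x.
Proof. symmetry; apply inv2_unique; rewrite ?inv2_r, ?src2_inv, ?tgt2_inv; reflexivity. Qed.

Lemma inv2_vcomp a b (x y : Cell C a b) :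
  tgt2 x = src2 y -> inv2 (vcomp y x) = vcomp (inv2 x) (inv2 y).
Proof.
intros e; symmetry; apply inv2_unique.
- assert (cancel_y : vcomp (inv2 y) (vcomp y x) = x).
  { rewrite vcompA, inv2_l by (rewrite ?src2_inv; auto). now apply vcomp_id2l. }
  rewrite <- vcompA, cancel_y, inv2_l, src2_v by (rewrite ?tgt2_v, ?src2_inv, ?tgt2_inv; auto).
  reflexivity.
- rewrite src2_v, src2_inv, tgt2_v by (rewrite ?tgt2_inv, ?src2_inv; auto); reflexivity.
Qed.

Lemma inv2_whL a b c (f : Hom C b c) (x : Cell C a b) :
  inv2 (hcomp (id2 f) x) = hcomp (id2 f) (inv2 x).
Proof.
symmetry; apply inv2_unique.
- rewrite <- interchange by (rewrite ?tgt2_id, ?src2_id, ?src2_inv; reflexivity).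
  now rewrite inv2_l, vcomp_id2l, src2_h, src2_id, hcomp_id2 by apply tgt2_id.
- now rewrite src2_h, tgt2_h, src2_id, tgt2_id, src2_inv.
Qed.

Lemma inv2_whR a b c (f : Hom C a b) (x : Cell C b c) :
  inv2 (hcomp x (id2 f)) = hcomp (inv2 x) (id2 f).
Proof.
symmetry; apply inv2_unique.
- rewrite <- interchange by (rewrite ?tgt2_id, ?src2_id, ?src2_inv; reflexivity).
  now rewrite inv2_l, (vcomp_id2l (x := id2 f)), src2_h, src2_id, hcomp_id2 by apply tgt2_id.
- now rewrite src2_h, tgt2_h, src2_id, tgt2_id, src2_inv.
Qed.

Lemma vcomp_inv2K a b (x y : Cell C a b) : tgt2 y = src2 x -> vcomp (inv2 x) (vcomp x y) = y.
Proof.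
intros e; rewrite vcompA, inv2_l by (rewrite ?src2_inv; auto).
now apply vcomp_id2l.
Qed.

Lemma vcompKinv2 a b (x y : Cell C a b) : tgt2 x = src2 y -> vcomp (vcomp y x) (inv2 x) = y.
Proof.
intros e; rewrite <- vcompA, inv2_r by (rewrite ?tgt2_inv; auto).
now apply vcomp_id2r.
Qed.

End TwoCells.

Ltac normalize_hom :=
  unfold lam; repeat rewrite <- compA; repeat rewrite comp1l; repeat rewrite comp1r;
  repeat rewrite <- compA.
Ltac normalize_hom_in H :=
  unfold lam in H; repeat rewrite <- compA in H; repeat rewrite comp1l in H;
  repeat rewrite comp1r in H; repeat rewrite <- compA in H.
Ltac solve_hom_eq := normalize_hom; reflexivity.

Ltac infer_cell := lazymatch goal with
  | |- is_cell (vcomp _ _) _ _ => eapply is_cell_vcomp; [infer_cell | infer_cell | solve_hom_eq]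
  | |- is_cell (hcomp _ _) _ _ => eapply is_cell_hcomp; [infer_cell | infer_cell]
  | |- is_cell (wh _ _ _) _ _ => eapply is_cell_wh; infer_cell
  | |- is_cell (inv2 _) _ _ => eapply is_cell_inv2; infer_cell
  | |- is_cell (id2 _) _ _ => eapply is_cell_id2
  | |- is_cell (qi_ep _) _ _ => eapply is_cell_qi_ep
  | |- is_cell (qi_et _) _ _ => eapply is_cell_qi_et
  | |- is_cell _ _ _ => eassumption
  end.

Ltac solve_boundary := lazymatch goal with
  | |- tgt2 ?r = src2 _ =>
      first [ eapply is_cell_composable; [infer_cell | infer_cell | solve_hom_eq]
            | match goal with H : tgt2 r = _ |- _ =>
                rewrite H; symmetry; eapply is_cell_src2; [infer_cell | solve_hom_eq] end ]
  | |- tgt2 _ = _ => eapply is_cell_tgt2; [infer_cell | solve_hom_eq]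
  | |- src2 _ = _ => eapply is_cell_src2; [infer_cell | solve_hom_eq]
  | |- _ = _ => solve_hom_eq
  end.

Ltac solve_side := first
  [ infer_cell
  | eapply is_cell_eq; [infer_cell | solve_hom_eq | solve_hom_eq]
  | solve_boundary ].

Section Layers.
Variable C : TwoGroupoid.

Lemma wh_id1 p q (x : Cell C p q) : x = wh (id1 q) x (id1 p).
Proof. unfold wh, whL, whR; now rewrite hcomp1l, hcomp1r. Qed.

Lemma wh_id2 s p q t (u : Hom C q t) (f : Hom C p q) (v : Hom C s p) :
  wh u (id2 f) v = id2 (comp u (comp f v)).
Proof. unfold wh, whL, whR; now rewrite !hcomp_id2. Qed.

Lemma inv2_wh s p q t (u : Hom C q t) (x : Cell C p q) (v : Hom C s p) :
  inv2 (wh u x v) = wh u (inv2 x) v.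
Proof. unfold wh, whL, whR; now rewrite inv2_whL, inv2_whR. Qed.

Lemma whL_wh s p q t t' (f : Hom C t t') (u : Hom C q t) (x : Cell C p q) (v : Hom C s p) :
  hcomp (id2 f) (wh u x v) = wh (comp f u) x v.
Proof. unfold wh, whL, whR; now rewrite hcompA, hcomp_id2. Qed.

Lemma whR_wh s' s p q t (f : Hom C s' s) (u : Hom C q t) (x : Cell C p q) (v : Hom C s p) :
  hcomp (wh u x v) (id2 f) = wh u x (comp v f).
Proof. unfold wh, whL, whR; now rewrite <- !hcompA, hcomp_id2. Qed.

Lemma wh_wh s s' p q t t' (u : Hom C t t') (u' : Hom C q t) (x : Cell C p q)
  (v' : Hom C s' p) (v : Hom C s s') :
  wh u (wh u' x v') v = wh (comp u u') x (comp v' v).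
Proof. unfold wh at 1, whL, whR; now rewrite whR_wh, whL_wh. Qed.

Lemma wh_vcomp s p q t (u : Hom C q t) (x y : Cell C p q) (v : Hom C s p) :
  tgt2 x = src2 y -> wh u (vcomp y x) v = vcomp (wh u y v) (wh u x v).
Proof.
intros e; unfold wh, whL, whR.
rewrite whR_vcomp, whL_vcomp; [reflexivity | | exact e].
rewrite tgt2_h, src2_h, tgt2_id, src2_id; congruence.
Qed.

Lemma wh_comp_l s p q q' t (u : Hom C q' t) (w : Hom C q q') (x : Cell C p q) (v : Hom C s p) :
  wh (comp u w) x v = wh u (hcomp (id2 w) x) v.
Proof. unfold wh, whL, whR; now rewrite <- hcomp_id2, <- hcompA, (hcompA (id2 w) x). Qed.

Lemma wh_comp_r s s' p q t (u : Hom C q t) (x : Cell C p q) (w : Hom C s' p) (v : Hom C s s') :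
  wh u x (comp w v) = wh u (hcomp x (id2 w)) v.
Proof. unfold wh, whL, whR; now rewrite <- hcomp_id2, (hcompA x). Qed.

Lemma hcomp_whisker_first a b c (y : Cell C b c) (x : Cell C a b) f f' g g' :
  is_cell y g g' -> is_cell x f f' ->
  hcomp y x = vcomp (hcomp (id2 g') x) (hcomp y (id2 f)).
Proof.
intros [ys yt] [xs xt].
rewrite <- interchange by (rewrite ?src2_id, ?tgt2_id; congruence).
now rewrite vcomp_id2l, vcomp_id2r.
Qed.

Lemma hcomp_whisker_second a b c (y : Cell C b c) (x : Cell C a b) f f' g g' :
  is_cell y g g' -> is_cell x f f' ->
  hcomp y x = vcomp (hcomp y (id2 f')) (hcomp (id2 g) x).
Proof.
intros [ys yt] [xs xt].
rewrite <- interchange by (rewrite ?src2_id, ?tgt2_id; congruence).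
now rewrite vcomp_id2l, vcomp_id2r.
Qed.

Lemma wh_exchange r0 r' s p q t (u : Hom C q t) (al : Cell C p q) (w : Hom C r' p)
  (be : Cell C r0 r') (v : Hom C s r0) f f' g g' :
  is_cell al f f' -> is_cell be g g' ->
  vcomp (wh (comp u (comp f' w)) be v) (wh u al (comp w (comp g v)))
  = vcomp (wh u al (comp w (comp g' v))) (wh (comp u (comp f w)) be v).
Proof.
intros Hal Hbe.
assert (Hwbe : is_cell (hcomp (id2 w) be) (comp w g) (comp w g')) by infer_cell.
rewrite !compA, !wh_comp_l, !wh_comp_r.
rewrite <- !wh_vcomp by solve_boundary.
now rewrite <- (hcomp_whisker_first Hal Hwbe), <- (hcomp_whisker_second Hal Hwbe).
Qed.

End Layers.

Section LayerMoves.
Variable C : TwoGroupoid.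

Lemma vcomp_wh_exchange_lr r0 r' s p q t (u : Hom C q t) (al : Cell C p q) (w : Hom C r' p)
  (be : Cell C r0 r') (v : Hom C s r0) f f' g g' u2 v1 (rest : Cell C s t) :
  is_cell al f f' -> is_cell be g g' -> u2 = comp u (comp f' w) -> v1 = comp w (comp g v) ->
  tgt2 rest = comp u (comp f v1) ->
  vcomp (wh u2 be v) (vcomp (wh u al v1) rest)
  = vcomp (wh u al (comp w (comp g' v))) (vcomp (wh (comp u (comp f w)) be v) rest).
Proof.
intros Hal Hbe -> -> e.
rewrite !vcompA by solve_boundary.
now rewrite (wh_exchange _ _ _ Hal Hbe).
Qed.

Lemma vcomp_wh_exchange_rl r0 r' s p q t (u : Hom C q t) (be : Cell C p q) (w : Hom C r' p)
  (al : Cell C r0 r') (v : Hom C s r0) f f' g g' u1 v2 (rest : Cell C s t) :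
  is_cell al f f' -> is_cell be g g' -> u1 = comp u (comp g w) -> v2 = comp w (comp f' v) ->
  tgt2 rest = comp u1 (comp f v) ->
  vcomp (wh u be v2) (vcomp (wh u1 al v) rest)
  = vcomp (wh (comp u (comp g' w)) al v) (vcomp (wh u be (comp w (comp f v))) rest).
Proof.
intros Hal Hbe -> -> e.
rewrite !vcompA by solve_boundary.
now rewrite <- (wh_exchange _ _ _ Hbe Hal).
Qed.

Lemma vcomp_wh_inv2K s p q t (u : Hom C q t) (x : Cell C p q) (v : Hom C s p) f f'
  (rest : Cell C s t) :
  is_cell x f f' -> tgt2 rest = comp u (comp f' v) ->
  vcomp (wh u x v) (vcomp (wh u (inv2 x) v) rest) = rest.
Proof.
intros Hx e.
rewrite vcompA, <- wh_vcomp, inv2_r by solve_boundary.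
destruct Hx as [_ ->]; rewrite wh_id2; exact (vcomp_id2l e).
Qed.

Lemma vcomp_inv2_whK s p q t (u : Hom C q t) (x : Cell C p q) (v : Hom C s p) f f'
  (rest : Cell C s t) :
  is_cell x f f' -> tgt2 rest = comp u (comp f v) ->
  vcomp (wh u (inv2 x) v) (vcomp (wh u x v) rest) = rest.
Proof.
intros Hx e.
rewrite vcompA, <- wh_vcomp, inv2_l by solve_boundary.
destruct Hx as [-> _]; rewrite wh_id2; exact (vcomp_id2l e).
Qed.

Lemma vcomp_rewrite_bottom a b (top bot c rest : Cell C a b) f g g' h :
  vcomp top bot = c -> is_cell bot f g -> is_cell top g' h -> g = g' -> tgt2 rest = f ->
  vcomp bot rest = vcomp (inv2 top) (vcomp c rest).
Proof.
intros <- [bs bt] [ts tt] <- e.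
rewrite <- (vcompA (al := rest) (be := bot) (ga := top)), vcomp_inv2K;
  rewrite ?tgt2_v; congruence.
Qed.

End LayerMoves.

Section Injectivity.
Variable C : TwoGroupoid.

Lemma whR_qinv_inj a b c (x y : Cell C a b) (f : Hom C c a) (Q : qinv f) g h :
  is_cell x g h -> is_cell y g h -> hcomp x (id2 f) = hcomp y (id2 f) -> x = y.
Proof.
assert (recover : forall z, is_cell z g h ->
  z = vcomp (vcomp (hcomp (id2 h) (qi_et Q)) (hcomp (hcomp z (id2 f)) (id2 (qi Q))))
            (inv2 (hcomp (id2 g) (qi_et Q)))).
{ intros z Hz.
  pose proof (is_cell_qi_et Q) as He.
  rewrite <- hcompA, hcomp_id2, <- (hcomp_whisker_first Hz He).
  rewrite (hcomp_whisker_second Hz He), hcomp1r, vcompKinv2 by solve_boundary.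
  reflexivity. }
intros Hx Hy e.
now rewrite (recover x Hx), (recover y Hy), e.
Qed.

Lemma vcomp_frame_inj a b (x y top bot : Cell C a b) f g h k :
  is_cell x g h -> is_cell y g h -> is_cell top h k -> is_cell bot f g ->
  vcomp top (vcomp x bot) = vcomp top (vcomp y bot) -> x = y.
Proof.
intros Hx Hy Ht Hb e.
assert (recover : forall z, is_cell z g h ->
  z = vcomp (inv2 top) (vcomp (vcomp top (vcomp z bot)) (inv2 bot))).
{ intros z Hz.
  rewrite <- vcompA, vcompKinv2, vcomp_inv2K by solve_boundary.
  reflexivity. }
now rewrite (recover x Hx), (recover y Hy), e.
Qed.

Lemma eq_of_framed_whiskering a b c d (x y : Cell C a b) (f : Hom C c a) (Qf : qinv f)
  (f' : Hom C d c) (Qf' : qinv f') (top bot : Cell C d b) g h k e :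
  is_cell x g h -> is_cell y g h ->
  is_cell top (comp (comp h f) f') k -> is_cell bot e (comp (comp g f) f') ->
  vcomp top (vcomp (hcomp (hcomp x (id2 f)) (id2 f')) bot)
  = vcomp top (vcomp (hcomp (hcomp y (id2 f)) (id2 f')) bot) ->
  x = y.
Proof.
intros Hx Hy Ht Hb E.
assert (Hxf : is_cell (hcomp x (id2 f)) (comp g f) (comp h f)) by infer_cell.
assert (Hyf : is_cell (hcomp y (id2 f)) (comp g f) (comp h f)) by infer_cell.
apply (whR_qinv_inj Qf Hx Hy), (whR_qinv_inj Qf' Hxf Hyf).
eapply vcomp_frame_inj; [infer_cell | infer_cell | exact Ht | exact Hb | exact E].
Qed.

End Injectivity.

Ltac flatten_step := first
  [ rewrite inv2_inv2 | rewrite inv2_wh | rewrite whL_wh | rewrite whR_wh | rewrite wh_wh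
  | rewrite inv2_vcomp by solve_boundary | rewrite whL_vcomp by solve_boundary
  | rewrite whR_vcomp by solve_boundary | rewrite wh_vcomp by solve_boundary
  | rewrite <- vcompA by solve_boundary ].
Ltac flatten_step_in H := first
  [ rewrite inv2_inv2 in H | rewrite inv2_wh in H | rewrite whL_wh in H | rewrite whR_wh in H
  | rewrite wh_wh in H
  | rewrite inv2_vcomp in H by solve_boundary | rewrite whL_vcomp in H by solve_boundary
  | rewrite whR_vcomp in H by solve_boundary | rewrite wh_vcomp in H by solve_boundary
  | rewrite <- vcompA in H by solve_boundary ].
Ltac flatten := repeat flatten_step; normalize_hom.
Ltac flatten_in H := repeat flatten_step_in H; normalize_hom_in H.

Ltac cell_type x := lazymatch x with
  | inv2 ?y => let fg := cell_type y in lazymatch fg with (?f, ?g) => constr:((g, f)) end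
  | _ => lazymatch goal with _ : is_cell x ?f ?g |- _ => constr:((f, g)) end
  end.

Ltac strip_prefix p w := lazymatch p with
  | id1 _ => w
  | comp ?a ?p' => lazymatch w with comp a ?w' => strip_prefix p' w' end
  | _ => lazymatch w with comp p ?w' => w' | p => open_constr:(id1 _) end
  end.

Ltac exchange_layers u1 al v1 u2 be v2 rest :=
  let fa := cell_type al in let fb := cell_type be in
  lazymatch fa with (?f, ?f') => lazymatch fb with (?g, ?g') =>
  first
    [ let w := strip_prefix u1 u2 in let w := strip_prefix f' w in
      rewrite (@vcomp_wh_exchange_lr _ _ _ _ _ _ _ u1 al w be v2 f f' g g' u2 v1 rest)
        by solve_side
    | let w := strip_prefix u2 u1 in let w := strip_prefix g w in
      rewrite (@vcomp_wh_exchange_rl _ _ _ _ _ _ _ u2 be w al v1 f f' g g' u1 v2 rest)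
        by solve_side ]
  end end; normalize_hom.

Ltac exchange al be := match goal with
  |- context [vcomp (wh ?u2 be ?v2) (vcomp (wh ?u1 al ?v1) ?rest)] =>
    exchange_layers u1 al v1 u2 be v2 rest end.
Ltac lower be := match goal with
  |- context [vcomp (wh ?u2 be ?v2) (vcomp (wh ?u1 ?al ?v1) ?rest)] =>
    exchange_layers u1 al v1 u2 be v2 rest end.
Ltac lower_at u be := match goal with
  |- context [vcomp (wh u be ?v2) (vcomp (wh ?u1 ?al ?v1) ?rest)] =>
    exchange_layers u1 al v1 u be v2 rest end.

Ltac cancel_inverses := repeat match goal with
  | |- context [vcomp (wh ?u ?x ?v) (vcomp (wh ?u (inv2 ?x) ?v) ?rest)] =>
      rewrite (@vcomp_wh_inv2K _ _ _ _ _ u x v _ _ rest) by solve_side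
  | |- context [vcomp (wh ?u (inv2 ?x) ?v) (vcomp (wh ?u ?x ?v) ?rest)] =>
      rewrite (@vcomp_inv2_whK _ _ _ _ _ u x v _ _ rest) by solve_side
  end.

Ltac vcomp_length c := lazymatch c with
  | vcomp _ ?b => let n := vcomp_length b in constr:(S n)
  | _ => constr:(1)
  end.
Ltac vcomp_top c n := lazymatch n with
  | 1 => lazymatch c with vcomp ?a _ => a end
  | S ?n' => lazymatch c with vcomp ?a ?b => let t := vcomp_top b n' in constr:(vcomp a t) end
  end.
Ltac vcomp_drop c n := lazymatch n with
  | 0 => c
  | S ?n' => lazymatch c with vcomp _ ?b => vcomp_drop b n' end
  end.
Ltac reassociate c := lazymatch c with
  | vcomp ?a ?b => reassociate b; rewrite (vcompA (ga := a) (be := b)) by solve_side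
  | _ => idtac
  end.

Ltac replace_segment E k := lazymatch type of E with ?c1 = ?c2 =>
  let m := vcomp_length c1 in
  let d := eval compute in (m - k) in
  lazymatch d with
  | 0 => reassociate c1; rewrite E; flatten
  | _ =>
    let top := vcomp_top c1 d in let bot := vcomp_drop c1 d in
    let Hsplit := fresh in assert (Hsplit : vcomp top bot = c1) by (flatten; reflexivity);
    let Hbot := fresh in eassert (Hbot : is_cell bot _ _) by infer_cell;
    let Htop := fresh in eassert (Htop : is_cell top _ _) by infer_cell;
    reassociate bot;
    rewrite (vcomp_rewrite_bottom (eq_trans Hsplit E) Hbot Htop) by solve_boundary;
    clear Hsplit Hbot Htop; flatten
  end end.

(* [paste -> x u v k] rewrites with the defining equation of x, whiskered by
   u and v.  Only the lowest k layers of its left side need to occur in the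
   goal; the remaining ones enter together with their inverses.  [paste <-]
   uses the equation from right to left. *)
Ltac defining_equation x := match goal with
  E : _ = _ |- _ => lazymatch type of E with context [x] => E end end.
Ltac whiskered_face x u v H :=
  let E := defining_equation x in
  pose proof (f_equal (fun z => wh u z v) E) as H; cbv beta in H; flatten_in H.
Tactic Notation "paste" "->" constr(x) constr(u) constr(v) constr(k) :=
  let H := fresh in whiskered_face x u v H; replace_segment H k; clear H.
Tactic Notation "paste" "<-" constr(x) constr(u) constr(v) constr(k) :=
  let H := fresh in whiskered_face x u v H; symmetry in H; replace_segment H k; clear H.

Ltac type_hypotheses :=
  repeat match goal with
  | H : src2 ?x = ?f /\ tgt2 ?x = ?g /\ _ = _ |- _ =>
      let Hs := fresh in let Ht := fresh in let E := fresh "E" in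
      destruct H as [Hs [Ht E]]; pose proof (conj Hs Ht : is_cell x f g) as H; clear Hs Ht;
      normalize_hom_in H
  | H : src2 ?x = ?f /\ tgt2 ?x = ?g |- _ => change (is_cell x f g) in H; normalize_hom_in H
  end;
  repeat match goal with Q : qinv _ |- _ =>
    lazymatch goal with
    | _ : is_cell (qi_ep Q) _ _ |- _ => fail
    | _ => pose proof (is_cell_qi_ep Q)
    end
  end.

Ltac layer_atoms :=
  repeat match goal with E : _ = _ |- _ => revert E end;
  repeat match goal with T : is_cell ?x _ _ |- _ => try rewrite (wh_id1 x); revert T end;
  intros;
  repeat match goal with E : _ = _ |- _ => progress flatten_in E end;
  flatten.

Unset Implicit Arguments.
Set Strict Implicit.

Theorem lemma6p10 (C : TwoGroupoid)
  (xi xj xk xl yi yj yk yl : Obj C)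
  (* first data *)
  (phij : Hom C xj xi) (Qij : qinv phij) (phik : Hom C xk xi) (Qik : qinv phik)
  (phil : Hom C xl xi) (Qil : qinv phil) (phjk : Hom C xk xj) (Qjk : qinv phjk)
  (phjl : Hom C xl xj) (Qjl : qinv phjl) (phkl : Hom C xl xk) (Qkl : qinv phkl)
  (gijk gijl gikl : Hom C xi xi) (gjkl : Hom C xj xj)
  (mijk : Cell C xk xi) (mijl mikl : Cell C xl xi) (mjkl : Cell C xl xj)
  (Hmijk : is_m gijk phik phij phjk mijk) (Hmijl : is_m gijl phil phij phjl mijl)
  (Hmikl : is_m gikl phil phik phkl mikl) (Hmjkl : is_m gjkl phjl phjk phkl mjkl)
  (nu : Cell C xi xi)
  (Hnu : is_nu Qij phik phil phjk phjl phkl gijk gijl gikl gjkl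
           mijk mijl mikl mjkl nu)
  (* second data *)
  (psij : Hom C yj yi) (Qsij : qinv psij) (psik : Hom C yk yi) (Qsik : qinv psik)
  (psil : Hom C yl yi) (Qsil : qinv psil) (psjk : Hom C yk yj) (Qsjk : qinv psjk)
  (psjl : Hom C yl yj) (Qsjl : qinv psjl) (pskl : Hom C yl yk) (Qskl : qinv pskl)
  (hijk hijl hikl : Hom C yi yi) (hjkl : Hom C yj yj)
  (nijk : Cell C yk yi) (nijl nikl : Cell C yl yi) (njkl : Cell C yl yj)
  (Hnijk : is_m hijk psik psij psjk nijk) (Hnijl : is_m hijl psil psij psjl nijl)
  (Hnikl : is_m hikl psil psik pskl nikl) (Hnjkl : is_m hjkl psjl psjk pskl njkl)
  (nu' : Cell C yi yi)
  (Hnu' : is_nu Qsij psik psil psjk psjl pskl hijk hijl hikl hjkl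
            nijk nijl nikl njkl nu')
  (* comparison data *)
  (chi : Hom C xi yi) (Qci : qinv chi) (chj : Hom C xj yj) (Qcj : qinv chj)
  (chk : Hom C xk yk) (Qck : qinv chk) (chl : Hom C xl yl) (Qcl : qinv chl)
  (thij thik thil : Hom C yi yi) (thjk thjl : Hom C yj yj) (thkl : Hom C yk yk)
  (zeij : Cell C xj yi) (zeik : Cell C xk yi) (zeil : Cell C xl yi)
  (zejk : Cell C xk yj) (zejl : Cell C xl yj) (zekl : Cell C xl yk)
  (Hzeij : is_zeta psij chj thij chi phij zeij)
  (Hzeik : is_zeta psik chk thik chi phik zeik)
  (Hzeil : is_zeta psil chl thil chi phil zeil)
  (Hzejk : is_zeta psjk chk thjk chj phjk zejk)
  (Hzejl : is_zeta psjl chl thjl chj phjl zejl)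
  (Hzekl : is_zeta pskl chl thkl chk phkl zekl)
  (* the derived 2-arrows b, B', Z *)
  (bijk bijl bikl : Cell C yi yi) (bjkl : Cell C yj yj)
  (Hbijk : is_b phij phjk phik Qsij psjk psik Qci chj chk thij thjk thik
             zeij zejk zeik gijk hijk mijk nijk bijk)
  (Hbijl : is_b phij phjl phil Qsij psjl psil Qci chj chl thij thjl thil
             zeij zejl zeil gijl hijl mijl nijl bijl)
  (Hbikl : is_b phik phkl phil Qsik pskl psil Qci chk chl thik thkl thil
             zeik zekl zeil gikl hikl mikl nikl bikl)
  (Hbjkl : is_b phjk phkl phjl Qsjk pskl psjl Qcj chk chl thjk thkl thjl
             zejk zekl zejl gjkl hjkl mjkl njkl bjkl)
  (B : Cell C yi yi) (HB : is_B Qsij Qsjk Qsik hijk nijk thkl B)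
  (Z : Cell C yi yi) (HZ : is_Z Qij Qsij Qci Qcj thij zeij gjkl Z) :
  let LL := lam Qsij (lam Qsjk thkl) in          (* λ'_ij λ'_jk(ϑ_kl) *)
  let Ljk := lam Qsij thjk in                    (* λ'_ij(ϑ_jk) *)
  let rnu := mon22 Qci (lam Qij gjkl) gijl gijk gikl nu in   (* r_i(ν_ijkl) *)
  let Lb := mon23 Qsij hjkl thjl (lam Qsjk thkl) thjk (lam Qcj gjkl) bjkl
    in                                           (* λ'_ij(b_jkl) *)
  vcomp (whL (comp (comp LL Ljk) thij) rnu)
    (vcomp (whL (comp LL Ljk) (whR Z (lam Qci gijl)))
       (vcomp (whR Lb (comp thij (lam Qci gijl)))
          (whL (lam Qsij hjkl) bijl)))
  = vcomp (whL LL (whR bijk (lam Qci gikl)))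
      (vcomp (whR B (comp thik (lam Qci gikl)))
         (vcomp (whL hijk bikl) (whR nu' thil))).
Proof.
cbv zeta; unfold is_m, is_zeta, is_nu, is_b, is_B, is_Z in *.
type_hypotheses.
(* The frames are the cells bounding the defining equations of the faces:
   zeta_il below; R_i^-1, m_ikl and m_ijk above.  The final id2 gives the
   lowest layer a cell below it, as the layer tactics expect. *)
eapply (eq_of_framed_whiskering Qci Qil
  (top := let W := comp (comp (lam Qsij (lam Qsjk thkl)) (lam Qsij thjk)) thij in
    vcomp (wh (comp W chi) mijk phkl)
   (vcomp (wh (comp W (comp chi gijk)) mikl (id1 xl))
   (vcomp (wh W (inv2 (Mc Qci gijk)) (comp gikl phil))
          (wh (comp W (lam Qci gijk)) (inv2 (Mc Qci gikl)) phil))))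
  (bot := vcomp (wh (comp (lam Qsij hjkl) hijl) zeil (id1 xl))
                (id2 (comp (comp (lam Qsij hjkl) hijl) (comp psil chl))))).
all: cbv zeta; unfold mon22, mon23, mu3, mu, Mc, lam2, whL, whR in *.
1-4: solve_side.
layer_atoms.
exchange zeil nu'.
paste <- bikl hijk (id1 xl) 2.
do 3 lower B.
paste -> B (id1 yi) (comp chk phkl) 1. cancel_inverses.
do 2 lower bijk.
paste <- bijk (lam Qsij (lam Qsjk thkl)) phkl 2. cancel_inverses.
exchange (inv2 mikl) (qi_ep Qci). cancel_inverses.
exchange zekl nijk.
paste <- nu' (id1 yi) chl 3.
paste <- bijl (comp psij (comp hjkl (qi Qsij))) (id1 xl) 2.
do 5 lower (qi_ep Qsij).
do 4 lower bjkl.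
paste <- bjkl psij (id1 xl) 2.
do 7 lower_at (comp psij (comp psjk (comp thkl (qi Qsjk)))) (inv2 (qi_ep Qsij)).
do 6 lower_at (comp psij (comp psjk (comp thkl (comp (qi Qsjk) (comp (qi Qsij) (comp psij thjk))))))
  (inv2 (qi_ep Qsij)).
do 2 lower Z.
paste -> Z (comp (lam Qsij (lam Qsjk thkl)) (lam Qsij thjk)) phjl 2. cancel_inverses.
exchange (inv2 mjkl) zeij.
match goal with |- context [wh ?u (qi_ep Qci) (comp gijl (comp (qi Qci) (comp chi phil)))] =>
  do 2 lower_at u (qi_ep Qci) end. cancel_inverses.
match goal with |- context [wh ?u (qi_ep Qci) phil] => lower_at u (qi_ep Qci) end. cancel_inverses.
lower nu. cancel_inverses.
paste <- nu (comp (comp (lam Qsij (lam Qsjk thkl)) (lam Qsij thjk)) (comp thij chi)) (id1 xl) 3.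
cancel_inverses.
reflexivity.
Qed.
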